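(* Let $c\in\mathbb{R}$. There is no function $U$ on $\mathbb{T}$ such that: $U$ is $C^1$ on $\mathbb{T}$ except at a single point $x_0\in\mathbb{T}$, where $U$ and $U'$ possess one-sided limits and $U$ is discontinuous (i.e. the one-sided limits of $U$ at $x_0$ differ); $U$ satisfies, for some constant $\gamma\in\mathbb{R}$, the profile equation $-cU+\tfrac{U^2}{2}+(1-\partial_x^2)^{-1}U=\gamma$ on $\mathbb{T}$; and $U$ satisfies the Rankine–Hugoniot condition $U(x_0-0)+U(x_0+0)=2c$. In other words, the Fornberg–Whitham equation $u_t+uu_x+(1-\partial_x^2)^{-1}u_x=0$ on $\mathbb{T}$ has no periodic traveling wave solution $u(x,t)=U(x-ct)$ with a single shock.
   Context: $\mathbb{T}=\mathbb{R}/\mathbb{Z}$, functions on $\mathbb{T}$ identified with $1$-periodic functions on $\mathbb{R}$. $(1-\partial_x^2)^{-1}U=K\ast U$, where $K$ is given on $[0,1]$ by $K(x)=\frac{\sqrt e}{e-1}\cosh(x-\tfrac12)$ and extended periodically; $U(x_0\mp0)$ denote the one-sided limits of $U$ at $x_0$ from the left and right. *)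

From Stdlib Require Import Reals.
From Coquelicot Require Import Coquelicot.
Open Scope R_scope.

(* Functions on T = R/Z are 1-periodic functions on R. *)
Definition periodic1 (U : R -> R) : Prop := forall x : R, U (x + 1) = U x.

Definition same_point_T (x x0 : R) : Prop := exists k : Z, x = x0 + IZR k.

(* Kernel of (1 - d_x^2)^{-1} on T: K(x) = sqrt e/(e-1) cosh(x - 1/2) on [0,1],
   extended 1-periodically (via the fractional part). *)
Definition K (x : R) : R :=
  sqrt (exp 1) / (exp 1 - 1) * cosh (frac_part x - 1 / 2).

Definition Kconv (U : R -> R) (x : R) : R :=
  RInt (fun y => K (x - y) * U y) 0 1.

(** Away from the shock, W := (1 - d_x^2)^{-1} U satisfies W' = dW and dW' = W - U.
    Differentiating the profile equation gives (U - c) U' = - dW, so that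
    E := dW^2/2 - P(U - c), with P(v) = v^4/8 + v^3/3 + k v^2/2 and k = c - gamma - c^2/2,
    is constant on the cell between two consecutive copies of the shock, hence, by
    periodicity, takes the same value on both sides of x0. As dW is continuous across
    the shock, P(UL - c) = P(UR - c). The Rankine-Hugoniot condition says
    UR - c = - (UL - c), and P(v) - P(-v) = 2 v^3 / 3 then forces UL = UR. *)

From Stdlib Require Import Reals Lra Lia ZArith.
From Coquelicot Require Import Coquelicot.
Open Scope R_scope.

Lemma periodic1_IZR (U : R -> R) :
  periodic1 U -> forall (n : Z) (x : R), U (x + IZR n) = U x.
Proof.
  intros HU n. induction n as [|n IH|n IH] using Z.peano_ind; intros x.
  - now rewrite Rplus_0_r.
  - rewrite succ_IZR, <- Rplus_assoc, HU. apply IH.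
  - rewrite <- (IH x), <- (HU (x + IZR (Z.pred n))).
    unfold Z.pred. rewrite plus_IZR. f_equal. simpl. ring.
Qed.

Lemma filterlim_at_right_shift (a d : R) :
  filterlim (fun y => y + d) (at_right a) (at_right (a + d)).
Proof.
  intros P [eps HP]. exists eps. intros y Hy Hay. apply HP; [|lra].
  revert Hy. unfold ball; simpl; unfold AbsRing_ball, minus, plus, opp; simpl.
  now replace (y + d + - (a + d)) with (y + - a) by ring.
Qed.

Lemma filterlim_at_left_shift (a d : R) :
  filterlim (fun y => y + d) (at_left a) (at_left (a + d)).
Proof.
  intros P [eps HP]. exists eps. intros y Hy Hay. apply HP; [|lra].
  revert Hy. unfold ball; simpl; unfold AbsRing_ball, minus, plus, opp; simpl.
  now replace (y + d + - (a + d)) with (y + - a) by ring.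
Qed.

Lemma filterlim_periodic1_at_right (U : R -> R) (x0 l : R) (n : Z) :
  periodic1 U -> filterlim U (at_right x0) (locally l) ->
  filterlim U (at_right (x0 + IZR n)) (locally l).
Proof.
  intros HU Hl.
  apply filterlim_ext with (fun y => U (y + - IZR n)).
  { intros y. rewrite <- (periodic1_IZR U HU n). f_equal; ring. }
  eapply filterlim_comp; [apply filterlim_at_right_shift|].
  now replace (x0 + IZR n + - IZR n) with x0 by ring.
Qed.

Lemma filterlim_periodic1_at_left (U : R -> R) (x0 l : R) (n : Z) :
  periodic1 U -> filterlim U (at_left x0) (locally l) ->
  filterlim U (at_left (x0 + IZR n)) (locally l).
Proof.
  intros HU Hl.
  apply filterlim_ext with (fun y => U (y + - IZR n)).
  { intros y. rewrite <- (periodic1_IZR U HU n). f_equal; ring. }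
  eapply filterlim_comp; [apply filterlim_at_left_shift|].
  now replace (x0 + IZR n + - IZR n) with x0 by ring.
Qed.

Lemma not_same_point_T_between (x0 y : R) (n : Z) :
  x0 + IZR n < y < x0 + IZR n + 1 -> ~ same_point_T y x0.
Proof.
  intros Hy [k ->].
  assert (n < k)%Z by (apply lt_IZR; lra).
  assert (k < n + 1)%Z by (apply lt_IZR; rewrite plus_IZR; lra).
  lia.
Qed.

Lemma not_same_point_T_locally (x0 x : R) :
  ~ same_point_T x x0 -> locally x (fun y => ~ same_point_T y x0).
Proof.
  intros Hx. set (n := Int_part (x - x0)).
  destruct (base_Int_part (x - x0)) as [Hn1 Hn2]. fold n in Hn1, Hn2.
  assert (Hn : IZR n <> x - x0) by (intros E; apply Hx; exists n; lra).
  apply (locally_interval _ x (x0 + IZR n) (x0 + IZR n + 1)); simpl; [lra | lra |].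
  intros y Hy1 Hy2. apply (not_same_point_T_between x0 y n). lra.
Qed.

Lemma not_same_point_T_minus_1 (x0 x : R) :
  ~ same_point_T x x0 -> ~ same_point_T (x - 1) x0.
Proof. intros Hx [k Hk]. apply Hx. exists (k + 1)%Z. rewrite plus_IZR. lra. Qed.

Lemma ex_RInt_one_sided_limits (f : R -> R) (a b la lb : R) : a < b ->
  (forall x, a < x < b -> continuous f x) ->
  filterlim f (at_right a) (locally la) -> filterlim f (at_left b) (locally lb) ->
  ex_RInt f a b.
Proof.
  intros Hab Hc Ha Hb.
  destruct (C0_extension_lt f la lb a b Hab Hc Ha Hb) as [g [Hg [Hgf _]]].
  apply (ex_RInt_ext g).
  - rewrite Rmin_left, Rmax_right by lra. exact Hgf.
  - apply (ex_RInt_continuous (V := R_CompleteNormedModule)). intros z _. apply Hg.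
Qed.

Lemma ex_RInt_unit_pieces (f : R -> R) (x0 : R) :
  (forall n : Z, ex_RInt f (x0 + IZR n) (x0 + IZR n + 1)) ->
  forall a b, ex_RInt f a b.
Proof.
  intros Hpiece.
  assert (Hspan : forall n m : Z, (n <= m)%Z -> ex_RInt f (x0 + IZR n) (x0 + IZR m)).
  { intros n. apply Z.le_ind.
    - intros m m' ->. reflexivity.
    - apply ex_RInt_point.
    - intros m _ IH. apply ex_RInt_Chasles with (x0 + IZR m); [exact IH|].
      rewrite succ_IZR, <- Rplus_assoc. apply Hpiece. }
  assert (Hle : forall a b, a <= b -> ex_RInt f a b).
  { intros a b Hab.
    destruct (base_Int_part (a - x0)) as [Ha _].
    destruct (archimed (b - x0)) as [Hb _].
    assert (Hnm : (Int_part (a - x0) <= up (b - x0))%Z) by (apply le_IZR; lra).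
    apply (ex_RInt_Chasles_2 (V := R_CompleteNormedModule))
      with (x0 + IZR (Int_part (a - x0))); [lra|].
    apply (ex_RInt_Chasles_1 (V := R_CompleteNormedModule)) with (x0 + IZR (up (b - x0))); [lra|].
    now apply Hspan. }
  intros a b. destruct (Rle_lt_dec a b).
  - now apply Hle.
  - apply ex_RInt_swap, Hle. lra.
Qed.

Lemma is_RInt_periodic1_shift (h : R -> R) (a b I : R) :
  periodic1 h -> is_RInt h a b I -> is_RInt h (a + 1) (b + 1) I.
Proof.
  intros Hh HI.
  apply (is_RInt_ext (V := R_NormedModule) (fun y => scal 1 (h (1 * y + -1)))).
  { intros y _. rewrite <- (Hh (1 * y + -1)).
    unfold scal; simpl; unfold mult; simpl. rewrite Rmult_1_l. f_equal; ring. }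
  apply (is_RInt_comp_lin (V := R_NormedModule)).
  now replace (1 * (a + 1) + -1) with a by ring; replace (1 * (b + 1) + -1) with b by ring.
Qed.

Lemma RInt_periodic1_window (h : R -> R) (a b : R) :
  periodic1 h -> ex_RInt h a (a + 1) -> a <= b <= a + 1 ->
  RInt h b (b + 1) = RInt h a (a + 1).
Proof.
  intros Hh Hint Hb.
  assert (Hab : ex_RInt h a b)
    by (apply (ex_RInt_Chasles_1 (V := R_CompleteNormedModule)) with (a + 1); [lra | exact Hint]).
  assert (Hba : ex_RInt h b (a + 1))
    by (apply (ex_RInt_Chasles_2 (V := R_CompleteNormedModule)) with a; [lra | exact Hint]).
  assert (Hshift := is_RInt_periodic1_shift h a b _ Hh (RInt_correct h a b Hab)).
  rewrite <- (RInt_Chasles h b (a + 1) (b + 1) Hba (ex_intro _ _ Hshift)).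
  rewrite (is_RInt_unique h (a + 1) (b + 1) _ Hshift).
  rewrite <- (RInt_Chasles h a b (a + 1) Hab Hba). unfold plus; simpl. ring.
Qed.

Lemma frac_part_plus_1 (z : R) : frac_part (z + 1) = frac_part z.
Proof.
  symmetry. apply (Int_part_frac_part_spec (z + 1) (Int_part z + 1)).
  - destruct (base_fp z). lra.
  - rewrite plus_IZR, (Rplus_Int_part_frac_part z) at 1. ring.
Qed.

Lemma K_periodic : periodic1 K.
Proof. intros z. unfold K. now rewrite frac_part_plus_1. Qed.

Lemma Kconv_periodic (U : R -> R) : periodic1 (Kconv U).
Proof.
  intros x. unfold Kconv. apply RInt_ext. intros y _.
  replace (x + 1 - y) with (x - y + 1) by ring. now rewrite K_periodic.
Qed.

Lemma K_unit_interval (z : R) : 0 <= z < 1 ->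
  K z = (exp z + exp 1 * exp (- z)) / (2 * (exp 1 - 1)).
Proof.
  intros Hz. unfold K, cosh.
  replace (frac_part z) with z by (apply (Int_part_frac_part_spec z 0); [exact Hz | simpl; ring]).
  assert (Hsqrt : sqrt (exp 1) = exp (1 / 2)).
  { rewrite <- (sqrt_square (exp (1 / 2))) by (left; apply exp_pos).
    rewrite <- exp_plus. f_equal. f_equal. field. }
  assert (He := exp_ineq1 1 R1_neq_R0).
  rewrite Hsqrt, <- (exp_plus 1 (- z)).
  replace (exp z) with (exp (1 / 2) * exp (z - 1 / 2))
    by (rewrite <- exp_plus; f_equal; field).
  replace (exp (1 + - z)) with (exp (1 / 2) * exp (- (z - 1 / 2)))
    by (rewrite <- exp_plus; f_equal; field).
  field. lra.
Qed.

Lemma filterlim_mult_continuous (F : (R -> Prop) -> Prop) {FF : Filter F}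
    (phi u : R -> R) (p l : R) :
  filter_le F (locally p) -> continuous phi p -> filterlim u F (locally l) ->
  filterlim (fun y => phi y * u y) F (locally (phi p * l)).
Proof.
  intros HF Hphi Hu.
  apply (filterlim_comp_2 phi u Rmult (filterlim_filter_le_1 phi HF Hphi) Hu).
  apply (filterlim_mult (K := R_AbsRing)).
Qed.

Lemma is_derive_0_eq (f : R -> R) (a b : R) :
  (forall x, a < x < b -> is_derive f x 0) ->
  forall y z, a < y < b -> a < z < b -> f y = f z.
Proof.
  intros Hf y z Hy Hz.
  assert (Hin : forall x, Rmin y z <= x <= Rmax y z -> a < x < b).
  { intros x Hx. pose proof (Rmin_glb_lt y z a (proj1 Hy) (proj1 Hz)).
    pose proof (Rmax_lub_lt y z b (proj2 Hy) (proj2 Hz)). lra. }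
  destruct (MVT_gen f y z (fun _ => 0)) as [w [_ Hw]].
  - intros x Hx. apply Hf, Hin. lra.
  - intros x Hx. apply continuity_pt_filterlim.
    apply (ex_derive_continuous (K := R_AbsRing) (V := R_NormedModule)).
    exists 0. now apply Hf, Hin.
  - lra.
Qed.

Definition potential (k v : R) : R := v ^ 4 / 8 + v ^ 3 / 3 + k * v ^ 2 / 2.

Lemma potential_opp_eq (k v : R) : potential k v = potential k (- v) -> v = 0.
Proof.
  unfold potential. intros Hv.
  destruct (Req_dec v 0) as [-> | Hnz]; [reflexivity | exfalso].
  apply (pow_nonzero v 3 Hnz). nra.
Qed.

Definition exp_window (lam : R) (U : R -> R) (x : R) : R :=
  exp (lam * x) * RInt (fun y => exp (- (lam * y)) * U y) (x - 1) x.

(** [W U] is [Kconv U] (lemma [Kconv_eq_W]) with the exponentials of the kernel taken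
    out of the integral, which makes it differentiable off the shock; [dW U] is its
    derivative there. *)
Definition W (U : R -> R) (x : R) : R :=
  (exp_window 1 U x + exp 1 * exp_window (-1) U x) / (2 * (exp 1 - 1)).

Definition dW (U : R -> R) (x : R) : R :=
  (exp_window 1 U x - exp 1 * exp_window (-1) U x) / (2 * (exp 1 - 1)).

Definition energy (c gamma : R) (U : R -> R) (x : R) : R :=
  dW U x ^ 2 / 2 - potential (c - gamma - c ^ 2 / 2) (U x - c).

Section PiecewiseContinuous.

Variables (U : R -> R) (x0 UL UR : R).
Hypothesis HU : periodic1 U.
Hypothesis HUc : forall x, ~ same_point_T x x0 -> continuous U x.
Hypothesis HUL : filterlim U (at_left x0) (locally UL).
Hypothesis HUR : filterlim U (at_right x0) (locally UR).

Lemma ex_RInt_mult_U (phi : R -> R) :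
  (forall x, continuous phi x) -> forall a b, ex_RInt (fun y => phi y * U y) a b.
Proof.
  intros Hphi. apply (ex_RInt_unit_pieces _ x0). intros n.
  apply (ex_RInt_one_sided_limits _ _ _
           (phi (x0 + IZR n) * UR) (phi (x0 + IZR (n + 1)) * UL)); [lra | | |].
  - intros x Hx. apply (continuous_mult (K := R_AbsRing) phi U); [apply Hphi |].
    exact (HUc x (not_same_point_T_between x0 x n Hx)).
  - apply (filterlim_mult_continuous (at_right _)); [apply filter_le_within | apply Hphi |].
    now apply filterlim_periodic1_at_right.
  - replace (x0 + IZR n + 1) with (x0 + IZR (n + 1)) by (rewrite plus_IZR; ring).
    apply (filterlim_mult_continuous (at_left _)); [apply filter_le_within | apply Hphi |].
    now apply filterlim_periodic1_at_left.
Qed.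

Lemma ex_RInt_exp_mult_U (lam a b : R) : ex_RInt (fun y => exp (- (lam * y)) * U y) a b.
Proof.
  apply ex_RInt_mult_U. intros x.
  apply (ex_derive_continuous (K := R_AbsRing) (V := R_NormedModule)). auto_derive. auto.
Qed.

Lemma continuous_exp_window (lam x : R) : continuous (exp_window lam U) x.
Proof.
  set (h := fun y => exp (- (lam * y)) * U y).
  apply (continuous_mult (K := R_AbsRing) (fun y => exp (lam * y))).
  - apply (ex_derive_continuous (K := R_AbsRing) (V := R_NormedModule)). auto_derive. auto.
  - apply (continuous_comp_2 (fun y => y - 1) (fun y => y) (RInt h)).
    + apply (ex_derive_continuous (K := R_AbsRing) (V := R_NormedModule)). auto_derive. auto.
    + apply continuous_id.
    + apply (continuous_RInt (V := R_NormedModule) h (x - 1) x (RInt h)).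
      apply filter_forall. intros ab.
      apply (RInt_correct (V := R_CompleteNormedModule)), ex_RInt_exp_mult_U.
Qed.

Lemma is_derive_exp_window (lam x : R) : ~ same_point_T x x0 ->
  is_derive (exp_window lam U) x (lam * exp_window lam U x + (1 - exp lam) * U x).
Proof.
  intros Hx. set (h := fun y => exp (- (lam * y)) * U y).
  assert (Hhc : forall y, ~ same_point_T y x0 -> locally y (fun z => continuity_pt h z)).
  { intros y Hy. apply (filter_imp (fun z => ~ same_point_T z x0)).
    - intros z Hz. apply continuity_pt_filterlim.
      apply (continuous_mult (K := R_AbsRing)); [|exact (HUc z Hz)].
      apply (ex_derive_continuous (K := R_AbsRing) (V := R_NormedModule)). auto_derive. auto.
    - now apply not_same_point_T_locally. }
  unfold exp_window. fold h. auto_derive.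
  { repeat split; [apply ex_RInt_exp_mult_U | apply Hhc | apply Hhc, Hx].
    replace (x + - (1)) with (x - 1) by ring. now apply not_same_point_T_minus_1. }
  replace (x + - (1)) with (x - 1) by ring. unfold h.
  replace (U (x - 1)) with (U x) by (rewrite <- (HU (x - 1)); f_equal; ring).
  replace (exp (- (lam * (x - 1)))) with (exp lam * exp (- (lam * x)))
    by (rewrite <- exp_plus; f_equal; ring).
  assert (Hinv : exp (lam * x) * exp (- (lam * x)) = 1)
    by (rewrite <- exp_plus, <- exp_0; f_equal; ring).
  replace ((1 - exp lam) * U x)
    with ((1 - exp lam) * U x * (exp (lam * x) * exp (- (lam * x)))) by (rewrite Hinv; ring).
  ring.
Qed.

Lemma exp_window_periodic (lam : R) : periodic1 (exp_window lam U).
Proof.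
  intros x. unfold exp_window. set (h := fun y => exp (- (lam * y)) * U y).
  assert (Hshift := RInt_comp_lin h 1 1 (x - 1) x).
  rewrite Rmult_1_l, Rmult_1_l in Hshift.
  replace (x + 1 - 1) with (x - 1 + 1) by ring.
  rewrite <- Hshift by apply ex_RInt_exp_mult_U.
  rewrite (RInt_ext _ (fun y => scal (exp (- lam)) (h y))).
  2:{ intros y _. unfold h, scal; simpl; unfold mult; simpl.
      rewrite !Rmult_1_l, HU, <- !Rmult_assoc, <- exp_plus. f_equal. f_equal. ring. }
  rewrite (RInt_scal (V := R_CompleteNormedModule)) by apply ex_RInt_exp_mult_U.
  unfold scal; simpl; unfold mult; simpl.
  rewrite <- !Rmult_assoc, <- !exp_plus. f_equal. f_equal. ring.
Qed.

Lemma is_derive_W (x : R) : ~ same_point_T x x0 -> is_derive (W U) x (dW U x).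
Proof.
  intros Hx. unfold W. auto_derive.
  { repeat split; eexists; apply (is_derive_exp_window _ _ Hx). }
  rewrite !(is_derive_unique _ _ _ (is_derive_exp_window _ _ Hx)).
  unfold dW. replace (exp (-1)) with (/ exp 1) by (rewrite <- exp_Ropp; f_equal; ring).
  assert (He := exp_ineq1 1 R1_neq_R0).
  field. lra.
Qed.

Lemma is_derive_dW (x : R) : ~ same_point_T x x0 -> is_derive (dW U) x (W U x - U x).
Proof.
  intros Hx. unfold dW. auto_derive.
  { repeat split; eexists; apply (is_derive_exp_window _ _ Hx). }
  rewrite !(is_derive_unique _ _ _ (is_derive_exp_window _ _ Hx)).
  unfold W. replace (exp (-1)) with (/ exp 1) by (rewrite <- exp_Ropp; f_equal; ring).
  assert (He := exp_ineq1 1 R1_neq_R0).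
  field. lra.
Qed.

Lemma continuous_dW (x : R) : continuous (dW U) x.
Proof.
  unfold dW, Rdiv.
  apply (continuous_mult (K := R_AbsRing) (fun y => _ - _)); [|apply continuous_const].
  apply (continuous_minus (V := R_NormedModule)); [apply continuous_exp_window|].
  apply (continuous_mult (K := R_AbsRing)); [apply continuous_const | apply continuous_exp_window].
Qed.

Lemma W_periodic : periodic1 (W U).
Proof. intros x. unfold W. now rewrite !exp_window_periodic. Qed.

Lemma dW_periodic : periodic1 (dW U).
Proof. intros x. unfold dW. now rewrite !exp_window_periodic. Qed.

Lemma Kconv_eq_W_unit (x : R) : 0 <= x < 1 -> Kconv U x = W U x.
Proof.
  intros Hx.
  set (h := fun y => K (x - y) * U y).
  set (h1 := fun y => exp (- (1 * y)) * U y).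
  set (h2 := fun y => exp (- (-1 * y)) * U y).
  set (a := exp x / (2 * (exp 1 - 1))).
  set (b := exp 1 * exp (- x) / (2 * (exp 1 - 1))).
  set (g := fun y => plus (scal a (h1 y)) (scal b (h2 y))).
  assert (Hg : ex_RInt g (x - 1) x).
  { apply (ex_RInt_plus (V := R_NormedModule)); apply (ex_RInt_scal (V := R_NormedModule));
      apply ex_RInt_exp_mult_U. }
  assert (Hgh : forall y, Rmin (x - 1) x < y < Rmax (x - 1) x -> g y = h y).
  { rewrite Rmin_left, Rmax_right by lra. intros y Hy.
    unfold g, h, h1, h2, a, b, scal, plus; simpl; unfold mult, plus; simpl.
    rewrite K_unit_interval by lra.
    replace (exp (x - y)) with (exp x * exp (- (1 * y)))
      by (rewrite <- exp_plus; f_equal; ring).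
    replace (exp (- (x - y))) with (exp (- x) * exp (- (-1 * y)))
      by (rewrite <- exp_plus; f_equal; ring).
    field. assert (He := exp_ineq1 1 R1_neq_R0). lra. }
  assert (Hh : periodic1 h).
  { intros y. unfold h. rewrite HU, <- (K_periodic (x - (y + 1))). f_equal. f_equal. ring. }
  (* the integrand is 1-periodic in y, and on (x - 1, x) we have frac_part (x - y) = x - y *)
  unfold Kconv. fold h.
  assert (Hwin : RInt h 0 (0 + 1) = RInt h (x - 1) (x - 1 + 1)).
  { apply (RInt_periodic1_window h (x - 1) 0 Hh); [|lra].
    replace (x - 1 + 1) with x by ring. exact (ex_RInt_ext g h _ _ Hgh Hg). }
  replace (0 + 1) with 1 in Hwin by ring. replace (x - 1 + 1) with x in Hwin by ring.
  rewrite Hwin.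
  rewrite <- (RInt_ext g h (x - 1) x Hgh).
  unfold g.
  rewrite (RInt_plus (V := R_CompleteNormedModule))
    by (apply (ex_RInt_scal (V := R_NormedModule)); apply ex_RInt_exp_mult_U).
  rewrite !(RInt_scal (V := R_CompleteNormedModule)) by apply ex_RInt_exp_mult_U.
  unfold W, exp_window, a, b, h1, h2, scal, plus; simpl; unfold mult, plus; simpl.
  rewrite Rmult_1_l. replace (-1 * x) with (- x) by ring.
  field. assert (He := exp_ineq1 1 R1_neq_R0). lra.
Qed.

Lemma Kconv_eq_W (x : R) : Kconv U x = W U x.
Proof.
  rewrite (Rplus_Int_part_frac_part x), Rplus_comm.
  rewrite (periodic1_IZR _ (Kconv_periodic U)), (periodic1_IZR _ W_periodic).
  apply Kconv_eq_W_unit. destruct (base_fp x). lra.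
Qed.

Section ProfileEquation.

Variables c gamma : R.
Hypothesis HUd : forall x, ~ same_point_T x x0 -> ex_derive U x.
Hypothesis Hprofile : forall x, ~ same_point_T x x0 ->
  - c * U x + U x ^ 2 / 2 + Kconv U x = gamma.

Lemma profile_derivative (x : R) : ~ same_point_T x x0 ->
  (U x - c) * Derive U x + dW U x = 0.
Proof.
  intros Hx.
  assert (Hconst : is_derive (fun y => - c * U y + U y ^ 2 / 2 + W U y) x 0).
  { apply (is_derive_ext_loc (fun _ => gamma)).
    - apply (filter_imp (fun y => ~ same_point_T y x0)); [|now apply not_same_point_T_locally].
      intros y Hy. rewrite <- Kconv_eq_W. symmetry. now apply Hprofile.
    - apply (is_derive_const (K := R_AbsRing) (V := R_NormedModule)). }
  assert (Hchain : is_derive (fun y => - c * U y + U y ^ 2 / 2 + W U y) x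
                     ((U x - c) * Derive U x + dW U x)).
  { auto_derive.
    - repeat split; first [apply HUd, Hx | eexists; apply (is_derive_W x Hx)].
    - rewrite (is_derive_unique (fun y : R => W U y) _ _ (is_derive_W x Hx)).
      change (Derive (fun y : R => U y) x) with (Derive U x). field. }
  rewrite <- (is_derive_unique _ _ _ Hchain). exact (is_derive_unique _ _ _ Hconst).
Qed.

Lemma is_derive_energy (x : R) : ~ same_point_T x x0 ->
  is_derive (energy c gamma U) x 0.
Proof.
  intros Hx. unfold energy, potential. auto_derive.
  { repeat split; first [apply HUd, Hx | eexists; apply (is_derive_dW x Hx)]. }
  rewrite (is_derive_unique (fun y : R => dW U y) _ _ (is_derive_dW x Hx)).
  change (Derive (fun y : R => U y) x) with (Derive U x).
  assert (HdW := profile_derivative x Hx).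
  assert (HW := Hprofile x Hx). rewrite Kconv_eq_W in HW.
  replace (dW U x) with (- ((U x - c) * Derive U x)) by lra.
  replace (W U x) with (gamma + c * U x - U x ^ 2 / 2) by lra.
  field.
Qed.

Lemma energy_periodic : periodic1 (energy c gamma U).
Proof. intros x. unfold energy. now rewrite dW_periodic, HU. Qed.

Lemma energy_near_shock (y : R) : x0 - 1 < y < x0 + 1 -> y <> x0 ->
  energy c gamma U y = energy c gamma U (x0 + 1 / 2).
Proof.
  intros Hy Hne.
  assert (Hcell : forall x, x0 < x < x0 + 1 -> is_derive (energy c gamma U) x 0).
  { intros x Hx. apply is_derive_energy, (not_same_point_T_between x0 x 0). simpl. lra. }
  destruct (Rlt_le_dec x0 y).
  - apply (is_derive_0_eq _ x0 (x0 + 1) Hcell); lra.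
  - rewrite <- energy_periodic. apply (is_derive_0_eq _ x0 (x0 + 1) Hcell); lra.
Qed.

Lemma potential_one_sided_limit (F : (R -> Prop) -> Prop) {FF : ProperFilter F} (l : R) :
  filter_le F (locally x0) -> F (fun y => y <> x0) -> filterlim U F (locally l) ->
  potential (c - gamma - c ^ 2 / 2) (l - c) = dW U x0 ^ 2 / 2 - energy c gamma U (x0 + 1 / 2).
Proof.
  intros HF Hne Hl.
  set (k := c - gamma - c ^ 2 / 2). set (E0 := energy c gamma U (x0 + 1 / 2)).
  apply (filterlim_locally_unique (F := F) (fun y => potential k (U y - c))).
  - apply (filterlim_comp _ _ _ U (fun v => potential k (v - c)) F (locally l) _ Hl).
    apply (ex_derive_continuous (K := R_AbsRing) (V := R_NormedModule)
             (fun v => potential k (v - c))).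
    unfold potential. auto_derive. auto.
  - assert (Hcell : locally x0 (fun y => x0 - 1 < y < x0 + 1))
      by (apply (locally_interval _ x0 (x0 - 1) (x0 + 1)); simpl; intros; lra).
    apply (filterlim_ext_loc (fun y => dW U y ^ 2 / 2 - E0)).
    + apply (filter_imp (fun y => (x0 - 1 < y < x0 + 1) /\ y <> x0)).
      * intros y [Hy Hy0]. assert (Hy' := energy_near_shock y Hy Hy0).
        fold E0 in Hy'. unfold energy in Hy'. fold k in Hy'. lra.
      * exact (filter_and _ _ (HF _ Hcell) Hne).
    + apply (filterlim_filter_le_1 _ HF).
      apply (continuous_comp (dW U) (fun w => w ^ 2 / 2 - E0)); [apply continuous_dW|].
      apply (ex_derive_continuous (K := R_AbsRing) (V := R_NormedModule)
               (fun w => w ^ 2 / 2 - E0)).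
      auto_derive. auto.
Qed.

Lemma potential_jump_eq :
  potential (c - gamma - c ^ 2 / 2) (UL - c) = potential (c - gamma - c ^ 2 / 2) (UR - c).
Proof.
  assert (HL : at_left x0 (fun y => y <> x0)) by (exists posreal_one; intros y _ Hy; lra).
  assert (HR : at_right x0 (fun y => y <> x0)) by (exists posreal_one; intros y _ Hy; lra).
  rewrite (potential_one_sided_limit _ UL (filter_le_within _) HL HUL).
  now rewrite (potential_one_sided_limit _ UR (filter_le_within _) HR HUR).
Qed.

End ProfileEquation.

End PiecewiseContinuous.

Theorem mainTheorem4 (c : R) :
  ~ exists (U : R -> R) (x0 gamma UL UR DL DR : R),
      periodic1 U
      /\ (forall x, ~ same_point_T x x0 ->
            ex_derive U x /\ continuous (Derive U) x)
      /\ filterlim U (at_left x0) (locally UL)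
      /\ filterlim U (at_right x0) (locally UR)
      /\ filterlim (Derive U) (at_left x0) (locally DL)
      /\ filterlim (Derive U) (at_right x0) (locally DR)
      /\ UL <> UR
      /\ (forall x, ~ same_point_T x x0 ->
            - c * U x + (U x) ^ 2 / 2 + Kconv U x = gamma)
      /\ UL + UR = 2 * c.
Proof.
  intros (U & x0 & gamma & UL & UR & _ & _ & HU & HUd & HUL & HUR & _ & _ & Hjump & Hprofile & HRH).
  assert (HUdiff : forall x, ~ same_point_T x x0 -> ex_derive U x) by (intros x Hx; apply HUd, Hx).
  assert (HUc : forall x, ~ same_point_T x x0 -> continuous U x)
    by (intros x Hx; apply (ex_derive_continuous (K := R_AbsRing) (V := R_NormedModule)),
        HUdiff, Hx).
  assert (Hpot := potential_jump_eq U x0 UL UR HU HUc HUL HUR c gamma HUdiff Hprofile).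
  replace (UR - c) with (- (UL - c)) in Hpot by lra.
  apply potential_opp_eq in Hpot. lra.
Qed.
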